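(* Let $(M,d)$ be a pointed metric space and $f\in\mathrm{Lip}_0(M,M)$ such that $R_{\widehat f}$ has nonempty interior in $\mathcal F(M)$. Then for every nonempty finite set $N\subset M$ there is an increasing sequence $(n(j))_j\subset\mathbb N$ such that $f^{n(j)}(x)\to x$ as $j\to\infty$ for all $x\in N$. In particular $R_f=M$.
   Context: A pointed metric space is a metric space $(M,d)$ with a distinguished point $0$. $\mathrm{Lip}_0(M,M)$ denotes the Lipschitz maps $f:M\to M$ with $f(0)=0$; $\mathrm{Lip}_0(M)$ the real-valued Lipschitz functions vanishing at $0$, normed by the Lipschitz constant. $\delta:M\to\mathrm{Lip}_0(M)^*$, $\delta(x)(\varphi)=\varphi(x)$; $\mathcal F(M)$ is the norm-closed linear span of $\delta(M)$ in $\mathrm{Lip}_0(M)^*$. $\widehat f$ is the unique bounded linear operator on $\mathcal F(M)$ with $\widehat f(\delta(x))=\delta(f(x))$. For a self-map $g$ of a metric space (for an operator, with norm distance), $R_g=\{x:\liminf_{n\to\infty} d(x,g^n(x))=0\}$. *)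

From HB Require Import structures.
From mathcomp Require Import all_boot all_order all_algebra.
From mathcomp Require Import all_classical all_reals all_analysis.
Set Implicit Arguments. Unset Strict Implicit. Unset Printing Implicit Defensive.
Import Order.TTheory GRing.Theory Num.Theory.
Local Open Scope classical_set_scope.
Local Open Scope ring_scope.

Section LipFree.
Variables (R : realType) (M : Type) (d : M -> M -> R).

Definition is_metric : Prop :=
  [/\ forall x y, d x y = 0 <-> x = y,
      forall x y, d x y = d y x &
      forall x y z, d x z <= d x y + d y z].

Variable pt : M.

Definition lip0_self (f : M -> M) : Prop :=
  f pt = pt /\ exists L : R, forall x y, d (f x) (f y) <= L * d x y.

Definition lip0 (phi : M -> R) : Prop :=
  phi pt = 0 /\ exists L : R, forall x y, `|phi x - phi y| <= L * d x y.

Definition lip0_ball (phi : M -> R) : Prop :=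
  phi pt = 0 /\ forall x y, `|phi x - phi y| <= d x y.

(* Functionals on Lip_0(M) are represented as maps (M -> R) -> R; only their
   values on Lip_0(M) matter. Dual-norm distance (in \bar R). *)
Definition fdist (Phi Psi : (M -> R) -> R) : \bar R :=
  ereal_sup [set (`|Phi phi - Psi phi|)%:E | phi in lip0_ball].

Definition lin_on_lip0 (Phi : (M -> R) -> R) : Prop :=
  forall (a b : R) (phi psi : M -> R), lip0 phi -> lip0 psi ->
    Phi (fun x => a * phi x + b * psi x) = a * Phi phi + b * Phi psi.

Definition delta (x : M) : (M -> R) -> R := fun phi => phi x.

Definition molecule (s : seq (R * M)) : (M -> R) -> R :=
  fun phi => \sum_(p <- s) p.1 * delta p.2 phi.

(* F(M): norm-closure of span delta(M) inside Lip_0(M)^* *)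
Definition free_space : set ((M -> R) -> R) :=
  [set Phi | lin_on_lip0 Phi /\
    forall e : R, 0 < e -> exists s, (fdist Phi (molecule s) < e%:E)%E].

(* \widehat f : F(M) -> F(M), hat f (delta x) = delta (f x); it is the
   restriction of the adjoint of the composition operator phi |-> phi o f. *)
Definition fhat (f : M -> M) (Phi : (M -> R) -> R) : (M -> R) -> R :=
  fun phi => Phi (phi \o f).

Definition recM (g : M -> M) : set M :=
  [set x | limn_einf (fun n => (d x (iter n g x))%:E) = 0%E].

Definition rec_fhat (f : M -> M) : set ((M -> R) -> R) :=
  [set Phi | free_space Phi /\
    limn_einf (fun n => fdist Phi (iter n (fhat f) Phi)) = 0%E].

Definition nonempty_interior_in_free (A : set ((M -> R) -> R)) : Prop :=
  exists Phi0, free_space Phi0 /\ exists r : R, 0 < r /\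
    forall Phi, free_space Phi -> (fdist Phi Phi0 < r%:E)%E -> A Phi.

End LipFree.

From HB Require Import structures.
From mathcomp Require Import all_boot all_order all_algebra.
From mathcomp Require Import all_classical all_reals all_analysis.
From mathcomp Require Import ring lra.
Import Order.TTheory GRing.Theory Num.Theory.
Local Open Scope classical_set_scope.
Local Open Scope ring_scope.
Set Implicit Arguments. Unset Strict Implicit.

(* Call a molecule [sum_k a_k delta(y_k)] generic at [x] when
      its total weight at [x] is not the sum of any family of its other
      coefficients.  If [f^n] moves [x] by at least [eta], a tent test function
      around [x], whose radius is chosen by pigeonhole so that no [f^n y_k]
      lies on its slope, shows that [f^n] moves such a molecule by at least a
      fixed positive amount in the dual norm.  Hence recurrence of a generic
      molecule along times [n_j] forces [f^(n_j) x --> x].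
   2. Perturbation.  Approximate [Phi0] by a molecule and add the terms
      [t 2^i delta(z_i)].  By uniqueness of binary expansions, all small
      [t > 0] but finitely many make the result generic at every [z_i]; for
      [t] small it lies in the ball around [Phi0], so it is recurrent.
   The theorem follows by choosing times [n_j] at which this molecule returns
   within [1/(j+1)]; taking N = {x} gives R_f = M. *)

Section Metric.
Variables (R : realType) (M : Type) (d : M -> M -> R).
Hypothesis metric_d : is_metric d.

Lemma d_refl x : d x x = 0.
Proof. by case: metric_d => /(_ x x) [_ ->]. Qed.

Lemma d_sym x y : d x y = d y x.
Proof. by case: metric_d. Qed.

Lemma d_tri x y z : d x z <= d x y + d y z.
Proof. by case: metric_d. Qed.

Lemma d_ge0 x y : 0 <= d x y.
Proof. by have := d_tri x y x; rewrite d_refl (d_sym y x); lra. Qed.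

Lemma d_gt0 x y : x <> y -> 0 < d x y.
Proof.
move=> xy; rewrite lt_def d_ge0 andbT; apply/eqP => dxy0.
by apply: xy; case: metric_d => /(_ x y) [+ _] _ _; apply.
Qed.

Lemma d_lip x y z : `|d x z - d y z| <= d x y.
Proof.
have := d_tri x y z; have := d_tri y x z; rewrite (d_sym y x).
by rewrite ler_norml; lra.
Qed.

End Metric.

Lemma min_lip (R : realType) (c a a' : R) :
  `|Num.min c a - Num.min c a'| <= `|a - a'|.
Proof.
rewrite ler_norml; have := ler_norm (a - a'); have := ler_norm (a' - a).
by rewrite distrC; case: (leP c a); case: (leP c a'); lra.
Qed.

Lemma max_lip (R : realType) (c a a' : R) :
  `|Num.max c a - Num.max c a'| <= `|a - a'|.
Proof.
rewrite ler_norml; have := ler_norm (a - a'); have := ler_norm (a' - a).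
by rewrite distrC; case: (leP c a); case: (leP c a'); lra.
Qed.

Section DualDistance.
Variables (R : realType) (M : Type) (d : M -> M -> R) (pt : M).

Lemma fdist_ub Phi Psi phi : lip0_ball d pt phi ->
  (`|Phi phi - Psi phi|%:E <= fdist d pt Phi Psi)%E.
Proof. by move=> ball_phi; apply: ereal_sup_ubound; exists phi. Qed.

Lemma fdist_le Phi Psi (c : R) :
  (forall phi, lip0_ball d pt phi -> `|Phi phi - Psi phi| <= c) ->
  (fdist d pt Phi Psi <= c%:E)%E.
Proof. by move=> le_c; apply: ge_ereal_sup => _ [phi ? <-]; rewrite lee_fin le_c. Qed.

Lemma fdist_sym Phi Psi : fdist d pt Phi Psi = fdist d pt Psi Phi.
Proof. by rewrite /fdist; congr ereal_sup; apply: eq_imagel => phi _; rewrite distrC. Qed.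

Lemma fdist_triangle Phi Psi Xi :
  (fdist d pt Phi Xi <= fdist d pt Phi Psi + fdist d pt Psi Xi)%E.
Proof.
apply: ge_ereal_sup => _ [phi ball_phi <-].
apply: le_trans (leeD (fdist_ub Phi Psi ball_phi) (fdist_ub Psi Xi ball_phi)).
by rewrite -EFinD lee_fin -[X in `|X|](subrKA (Psi phi)) ler_normD.
Qed.

Lemma iter_fhat (f : M -> M) n (Phi : (M -> R) -> R) phi :
  iter n (fhat f) Phi phi = Phi (fun w => phi (iter n f w)).
Proof. by elim: n phi => [//|n IH] phi /=; rewrite /fhat IH. Qed.

Definition finmol (K : nat) (a : nat -> R) (y : nat -> M) : (M -> R) -> R :=
  molecule (mkseq (fun k => (a k, y k)) K).

Lemma finmolE K a y phi : finmol K a y phi = \sum_(k < K) a k * phi (y k).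
Proof.
rewrite /finmol /molecule /mkseq big_map.
by rewrite -(big_mkord xpredT (fun k => a k * delta (y k) phi)) /index_iota subn0.
Qed.

Lemma molecule_free (s : seq (R * M)) : free_space d pt (molecule s).
Proof.
split=> [a b phi psi _ _|e e0].
  by rewrite /molecule /delta !mulr_sumr -big_split /=; apply: eq_bigr => p _; ring.
exists s; apply: le_lt_trans (_ : 0%:E < e%:E)%E; last by rewrite lte_fin.
by apply: fdist_le => phi _; rewrite subrr normr0.
Qed.

End DualDistance.

(* Pigeonhole: [K] reals cannot meet all the [K+1] disjoint open intervals
   [(i del, (i+1) del)], [i <= K]. *)
Lemma empty_slot (R : realType) (K : nat) (e : 'I_K -> R) (del : R) : 0 < del ->
  exists i : 'I_K.+1, forall k, ~~ ((i%:R * del < e k) && (e k < i.+1%:R * del)).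
Proof.
move=> del0.
have [/existsP [i /forallP free]|/existsPn hit] :=
  boolP [exists i : 'I_K.+1, [forall k, ~~ ((i%:R * del < e k) && (e k < i.+1%:R * del))]].
  by exists i.
have /fin_all_exists [g g_in] : forall i : 'I_K.+1,
    exists k, (i%:R * del < e k) && (e k < i.+1%:R * del).
  by move=> i; have /forallPn [k] := hit i; rewrite negbK; exists k.
suff /leq_card : injective g by rewrite !card_ord ltnn.
move=> i j gij; move: (g_in i) (g_in j); rewrite gij => /andP[lo_i hi_i] /andP[lo_j hi_j].
have := lt_trans lo_i hi_j; have := lt_trans lo_j hi_i.
rewrite !ltr_pM2r // !ltr_nat !ltnS => ji ij.
by apply/val_inj/eqP; rewrite eqn_leq ij ji.
Qed.

Lemma fin_pos_lb (R : realType) (T : finType) (P : pred T) (v : T -> R) :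
  (forall t, P t -> 0 < v t) -> exists r, 0 < r /\ forall t, P t -> r <= v t.
Proof.
move=> v_gt0; exists (\big[Order.min/1]_(t | P t) v t); split.
  by apply: lt_bigmin => //; apply: ltr01.
by move=> t Pt; apply: bigmin_le_cond.
Qed.

Lemma avoid_roots (R : realType) (Z : finType) (A C : Z -> R) (b : R) : 0 < b ->
  exists t, [/\ 0 < t, t <= b & forall z, C z != 0 -> A z + t * C z != 0].
Proof.
move=> b0.
have [t0 [t00 t0_le]] : exists t0, 0 < t0 /\
    forall z, A z != 0 -> t0 <= `|A z| / (`|C z| + 1).
  apply: fin_pos_lb => z Az.
  by rewrite divr_gt0 ?normr_gt0 // ltr_wpDl ?ltr01.
have t_gt0 : 0 < Num.min t0 b by rewrite lt_min t00 b0.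
have t_le_t0 : Num.min t0 b <= t0 by rewrite ge_min lexx.
exists (Num.min t0 b); split=> //; first by rewrite ge_min lexx orbT.
move=> z Cz; have [->|Az] := eqVneq (A z) 0.
  by rewrite add0r mulf_neq0 // gt_eqF.
rewrite -normr_gt0; apply: lt_le_trans (lerB_normD _ _).
rewrite subr_gt0 normrM (gtr0_norm t_gt0).
apply: le_lt_trans (ler_wpM2r (normr_ge0 _) t_le_t0) _.
apply: le_lt_trans (ler_wpM2r (normr_ge0 _) (t0_le z Az)) _.
rewrite mulrAC ltr_pdivrMr ?ltr_wpDl ?ltr01 // ltr_pM2l ?normr_gt0 //.
by rewrite ltrDl ltr01.
Qed.

Lemma sum_pow2_lt n (P : pred nat) : (\sum_(i < n | P i) 2 ^ i < 2 ^ n)%N.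
Proof.
elim: n => [|n IH]; first by rewrite big_ord0.
rewrite big_mkcond big_ord_recr /= -big_mkcond expnS.
case: (P n); last by rewrite addn0 (leq_trans IH) // leq_pmull.
by rewrite mul2n -addnn ltn_add2r.
Qed.

Lemma sum_pow2_neq q (P : pred nat) i0 : (i0 < q)%N -> ~~ P i0 ->
  (\sum_(i < q | P i) 2 ^ i != 2 ^ i0)%N.
Proof.
move=> i0q nP; rewrite neq_ltn.
have [/existsP [i /andP [Pi i0i]]|/existsPn below] :=
  boolP [exists i : 'I_q, P i && (i0 < i)%N].
  rewrite (bigD1 i) //= ltn_addr ?orbT //.
  by apply: leq_trans (_ : 2 ^ i <= _)%N; rewrite ?leq_addr // ltn_exp2l.
rewrite (eq_bigl (fun i : 'I_q => P i && (i < i0)%N)); last first.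
  move=> i; case Pi: (P i) => //=; move: (below i); rewrite Pi /= -leqNgt.
  by rewrite leq_eqVlt => /orP [/eqP ii0|//]; move: nP; rewrite -ii0 Pi.
by rewrite -(big_ord_widen_cond q) ?(ltnW i0q) ?sum_pow2_lt.
Qed.

Section LiminfZero.
Variable R : realType.
Local Open Scope ereal_scope.

Lemma limn_einfE (u : (\bar R)^nat) : limn_einf u = ereal_sup (range (einfs u)).
Proof. by rewrite limn_einf_lim; apply/cvg_lim => //; exact: cvg_einfs_sup. Qed.

Lemma limn_einf0_frequently (u : (\bar R)^nat) : limn_einf u = 0 ->
  forall e : R, (0 < e)%R -> forall N0, exists n, (N0 <= n)%N /\ u n < e%:E.
Proof.
move=> u0 e e0 N0.
have : einfs u N0 < e%:E.
  apply: le_lt_trans (_ : 0 < e%:E); last by rewrite lte_fin.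
  by rewrite -u0 limn_einfE; apply: ereal_sup_ubound; exists N0.
by move=> /ereal_inf_lt [_ [k /= Nk <-] uk]; exists k.
Qed.

Lemma homo_ltn_ge (n : nat -> nat) : {homo n : i j / (i < j)%N >-> (i < j)%N} ->
  forall j, (j <= n j)%N.
Proof. by move=> n_incr; elim => // j IH; apply: leq_ltn_trans IH (n_incr _ _ _). Qed.

Lemma limn_einf0_subseq (v : nat -> R) (n : nat -> nat) :
  (forall k, (0 <= v k)%R) ->
  {homo n : i j / (i < j)%N >-> (i < j)%N} ->
  (fun j => v (n j)) @ \oo --> 0%R ->
  limn_einf (fun k => (v k)%:E) = 0.
Proof.
move=> v_ge0 n_incr vn0; rewrite limn_einfE; apply/eqP; rewrite eq_le; apply/andP; split.
  apply: ge_ereal_sup => _ [k _ <-]; apply/lee_addgt0Pr => e e0; rewrite add0e.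
  have [J _ vnJ] := (cvgrPdist_lt _ _).1 vn0 e e0.
  have := vnJ (maxn J k) (leq_maxl J k); rewrite /= sub0r normrN => small.
  apply: le_trans (_ : (v (n (maxn J k)))%:E <= e%:E); last first.
    by rewrite lee_fin; apply: le_trans (ltW small); apply: ler_norm.
  apply: ereal_inf_lbound; exists (n (maxn J k)) => //=.
  by apply: leq_trans (homo_ltn_ge n_incr _); apply: leq_maxr.
apply: le_trans (_ : einfs (fun k => (v k)%:E) 0%N <= _); last first.
  by apply: ereal_sup_ubound; exists 0%N.
by apply: le_ereal_inf_tmp => _ [k _ <-]; rewrite lee_fin.
Qed.

End LiminfZero.

(* [chain_from g j] = [g (j, chain_from g (j-1) + 1)]: iterating a choice
   function [g (j, N0) >= N0] gives strictly increasing values. *)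
Fixpoint chain_from (g : nat * nat -> nat) (j : nat) : nat :=
  if j is j'.+1 then g (j, (chain_from g j').+1) else g (0, 0)%N.

Lemma increasing_witnesses (P : nat -> nat -> Prop) :
  (forall j N0, exists n, (N0 <= n)%N /\ P j n) ->
  exists s : nat -> nat, {homo s : i j / (i < j)%N >-> (i < j)%N} /\
     forall j, P j (s j).
Proof.
move=> P_unbounded.
have [g g_spec] := choice (fun jN : nat * nat => P_unbounded jN.1 jN.2).
exists (chain_from g); split.
  apply: homo_ltn => [a b c|i]; first exact: ltn_trans.
  by have [] := g_spec (i.+1, (chain_from g i).+1).
by case=> [|j]; [have [] := g_spec (0, 0)%N|have [] := g_spec (j.+1, (chain_from g j).+1)].
Qed.

Section TentFunction.
Variables (R : realType) (M : Type) (d : M -> M -> R) (pt : M).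
Hypothesis metric_d : is_metric d.
Variables (x : M) (al del : R).
Hypothesis del_ge0 : 0 <= del.

Definition tent (w : M) : R := Num.min del (Num.max 0 (al + del - d w x)).

Lemma tent_far w : al + del <= d w x -> tent w = 0.
Proof.
move=> far; rewrite /tent (_ : Num.max 0 _ = 0) ?min_r //.
by apply/max_l; rewrite subr_le0.
Qed.

Lemma tent_near w : d w x <= al -> tent w = del.
Proof.
move=> near.
have pos : 0 <= al + del - d w x by rewrite subr_ge0 (le_trans near) ?lerDl.
have big : del <= al + del - d w x by rewrite addrAC lerDr subr_ge0.
by rewrite /tent (max_r pos) (min_l big).
Qed.

Lemma tent_ball : al + del <= d pt x -> lip0_ball d pt tent.
Proof.
move=> far_pt; split=> [|w w']; first exact: tent_far.
apply: le_trans (min_lip _ _ _) _; apply: le_trans (max_lip _ _ _) _.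
rewrite (_ : _ - _ - _ = d w' x - d w x); last by ring.
by rewrite distrC d_lip.
Qed.

End TentFunction.

Section Separation.
Variables (R : realType) (M : Type) (d : M -> M -> R) (pt : M) (f : M -> M).
Hypothesis metric_d : is_metric d.

(* The test function is a tent around [x] whose radius is
   chosen, by pigeonhole, so that no point [f^n y_k] lies in its slope. *)
Lemma separation (K : nat) (a : nat -> R) (y : nat -> M) (x : M) (n : nat)
  (eta rho sigma : R) :
  0 < eta -> eta <= rho -> rho <= d pt x ->
  (forall k, (k < K)%N -> y k <> x -> rho <= d (y k) x) ->
  (forall J : {set 'I_K}, (forall k, k \in J -> y k <> x) ->
     sigma <= `|\sum_(k in J) a k - \sum_(k < K | `[< y k = x >]) a k|) ->
  eta <= d (iter n f x) x ->
  ((eta / K.+1%:R * sigma)%:E <=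
     fdist d pt (finmol K a y) (iter n (fhat f) (finmol K a y)))%E.
Proof.
move=> eta0 eta_rho rho_pt rho_y sigma_J moved.
set del := eta / K.+1%:R.
have del0 : 0 < del by rewrite divr_gt0 // ltr0n.
have [i slot] := empty_slot (fun k : 'I_K => d (iter n f (y k)) x) del0.
set al := i%:R * del in slot *.
have al_del : al + del <= eta.
  rewrite /al -{2}(mul1r del) -mulrDl natr1 /del mulrA ler_pdivrMr ?ltr0n //.
  by rewrite mulrC ler_pM2l // ler_nat ltn_ord.
have ball := @tent_ball _ _ d pt metric_d x al del (ltW del0)
  (le_trans al_del (le_trans eta_rho rho_pt)).
apply: le_trans (fdist_ub _ _ ball); rewrite lee_fin iter_fhat !finmolE.
set J := [set k : 'I_K | d (iter n f (y k)) x <= al]%SET.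
have at_start : \sum_(k < K) a k * tent d x al del (y k)
    = (\sum_(k < K | `[< y k = x >]) a k) * del.
  rewrite mulr_suml [RHS]big_mkcond /=; apply: eq_bigr => k _.
  case: asboolP => [->|ykx].
    by rewrite (tent_near (ltW del0)) // (d_refl metric_d) /al mulr_ge0 // ltW.
  rewrite (tent_far (ltW del0)) ?mulr0 //; apply: le_trans (rho_y _ (ltn_ord k) ykx).
  exact: le_trans eta_rho.
have at_n : \sum_(k < K) a k * tent d x al del (iter n f (y k))
    = (\sum_(k in J) a k) * del.
  rewrite mulr_suml [RHS]big_mkcond /=; apply: eq_bigr => k _.
  rewrite inE; case: ifP => [near|/negbT]; first by rewrite (tent_near (ltW del0)).
  rewrite -ltNge => not_near.
  have far : al + del <= d (iter n f (y k)) x.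
    by move: (slot k); rewrite not_near /= -leNgt -natr1 mulrDl mul1r.
  by rewrite (tent_far (ltW del0)) ?mulr0.
rewrite at_start at_n -mulrBl normrM (gtr0_norm del0) [X in _ <= X]mulrC ler_pM2l // distrC.
apply: sigma_J => k; rewrite inE => near ykx; move: near; rewrite ykx.
by have := le_trans al_del moved; lra.
Qed.

End Separation.

Section GenericMolecules.
Variables (R : realType) (M : Type) (d : M -> M -> R) (pt : M) (f : M -> M).
Hypothesis metric_d : is_metric d.
Hypothesis f_pt : f pt = pt.

Definition generic_at (K : nat) (a : nat -> R) (y : nat -> M) (x : M) : Prop :=
  forall J : {set 'I_K}, (forall k, k \in J -> y k <> x) ->
    \sum_(k in J) a k != \sum_(k < K | `[< y k = x >]) a k.

Lemma iter_f_pt n : iter n f pt = pt.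
Proof. by elim: n => //= n ->. Qed.

Lemma generic_recurrence (K : nat) (a : nat -> R) (y : nat -> M) (x : M)
    (n : nat -> nat) :
  generic_at K a y x ->
  (forall j, (fdist d pt (finmol K a y) (iter (n j) (fhat f) (finmol K a y))
               < (j.+1%:R^-1)%:E)%E) ->
  (fun j => d (iter (n j) f x) x) @ \oo --> 0.
Proof.
move=> generic recurrent.
apply/cvgrPdist_lt => e e0.
have [->|x_pt] := pselect (x = pt).
  by exists 0%N => // j _ /=; rewrite iter_f_pt d_refl // subrr normr0.
have [rho [rho0 rho_y]] := @fin_pos_lb R _ (fun k : 'I_K => `[< y k <> x >])
  (fun k => d (y k) x) (fun k ykx => d_gt0 metric_d (asboolW ykx)).
have mismatch_gt0 (J : {set 'I_K}) : [forall k in J, `[< y k <> x >]] ->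
    0 < `|\sum_(k in J) a k - \sum_(k < K | `[< y k = x >]) a k|.
  move=> /forall_inP J_avoids; rewrite normr_gt0 subr_eq0.
  by apply: generic => k /J_avoids /asboolW.
have [sigma [sigma0 sigma_J]] := fin_pos_lb mismatch_gt0.
set rho' := Num.min rho (d pt x).
have rho'_y k : (k < K)%N -> y k <> x -> rho' <= d (y k) x.
  by move=> kK ykx; rewrite ge_min (rho_y (Ordinal kK)) //; apply/asboolP.
have sigma_J' (J : {set 'I_K}) : (forall k, k \in J -> y k <> x) ->
    sigma <= `|\sum_(k in J) a k - \sum_(k < K | `[< y k = x >]) a k|.
  by move=> J_avoids; apply/sigma_J/forall_inP => k /J_avoids /asboolP.
set eta := Num.min e rho'.
have eta0 : 0 < eta by rewrite !lt_min e0 rho0 d_gt0 // => /esym.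
set c := eta / K.+1%:R * sigma.
have c0 : 0 < c by rewrite mulr_gt0 // divr_gt0 // ltr0n.
exists (Num.truncn c^-1) => // j /= c_j; rewrite sub0r normrN ger0_norm ?d_ge0 //.
apply: (@lt_le_trans _ _ eta); last by rewrite ge_min lexx.
rewrite ltNge; apply/negP => moved.
have eta_rho' : eta <= rho' by rewrite ge_min lexx orbT.
have rho'_pt : rho' <= d pt x by rewrite ge_min lexx orbT.
have := separation (f := f) metric_d eta0 eta_rho' rho'_pt rho'_y sigma_J' moved.
move=> /le_lt_trans /(_ (recurrent j)); rewrite lte_fin; apply/negP; rewrite -leNgt.
rewrite -/c -[c in _ <= c]invrK lef_pV2 ?posrE ?invr_gt0 ?ltr0n //.
by apply: ltW; apply: lt_le_trans (truncnS_gt _) _; rewrite ler_nat ltnS.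
Qed.
End GenericMolecules.

Section Perturbation.
Variables (R : realType) (M : Type) (d : M -> M -> R) (pt : M).
Hypothesis metric_d : is_metric d.
Variables (p : nat) (a0 : nat -> R) (y0 : nat -> M) (q : nat) (z : nat -> M).
Hypothesis z_inj : forall i j, (i < q)%N -> (j < q)%N -> z i = z j -> i = j.

Definition base_mismatch (x : M) (J : {set 'I_(p + q)}) : R :=
  \sum_(k < p | lshift q k \in J) a0 k - \sum_(k < p | `[< y0 k = x >]) a0 k.

Definition binary_mismatch (i0 : nat) (J : {set 'I_(p + q)}) : R :=
  \sum_(i < q | rshift p i \in J) 2%:R ^+ i - 2%:R ^+ i0.

Lemma binary_mismatch_neq0 (i0 : 'I_q) (J : {set 'I_(p + q)}) :
  rshift p i0 \notin J -> binary_mismatch i0 J != 0.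
Proof.
move=> i0_notin; rewrite subr_eq0 -natrX.
rewrite (eq_bigr (fun i : 'I_q => (2 ^ i)%:R)) => [|i _]; last by rewrite natrX.
rewrite -natr_sum eqr_nat.
rewrite (eq_bigl (fun i : 'I_q => rshift p (insubd i0 i) \in J)) => [|i]; last by rewrite valKd.
by apply: (sum_pow2_neq (P := fun n => rshift p (insubd i0 n) \in J)); rewrite ?valKd.
Qed.

Section Weights.
Variable t : R.

Definition pert_coef (k : nat) : R := if (k < p)%N then a0 k else t * 2%:R ^+ (k - p).
Definition pert_pt (k : nat) : M := if (k < p)%N then y0 k else z (k - p).

Lemma pert_coef_lshift (k : 'I_p) : pert_coef (lshift q k) = a0 k.
Proof. by rewrite /pert_coef /= ltn_ord. Qed.
Lemma pert_pt_lshift (k : 'I_p) : pert_pt (lshift q k) = y0 k.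
Proof. by rewrite /pert_pt /= ltn_ord. Qed.
Lemma pert_coef_rshift (i : 'I_q) : pert_coef (rshift p i) = t * 2%:R ^+ i.
Proof. by rewrite /pert_coef /= ltnNge leq_addr /= addKn. Qed.
Lemma pert_pt_rshift (i : 'I_q) : pert_pt (rshift p i) = z i.
Proof. by rewrite /pert_pt /= ltnNge leq_addr /= addKn. Qed.

Lemma finmol_pert phi : finmol (p + q) pert_coef pert_pt phi =
  finmol p a0 y0 phi + t * \sum_(i < q) 2%:R ^+ i * phi (z i).
Proof.
rewrite !finmolE big_split_ord mulr_sumr /=; congr (_ + _); apply: eq_bigr.
  by move=> k _; rewrite pert_coef_lshift pert_pt_lshift.
by move=> i _; rewrite pert_coef_rshift pert_pt_rshift mulrA.
Qed.

Lemma fdist_pert : 0 <= t ->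
  (fdist d pt (finmol (p + q) pert_coef pert_pt) (finmol p a0 y0)
     <= (t * \sum_(i < q) 2%:R ^+ i * d (z i) pt)%:E)%E.
Proof.
move=> t_ge0; apply: fdist_le => phi [phi_pt phi_lip].
rewrite finmol_pert addrAC subrr add0r normrM ger0_norm // ler_wpM2l //.
apply: le_trans (ler_norm_sum _ _ _) (ler_sum _ _) => i _.
rewrite normrM ger0_norm ?exprn_ge0 ?ler0n // ler_wpM2l ?exprn_ge0 ?ler0n //.
by have := phi_lip (z i) pt; rewrite phi_pt subr0.
Qed.

Lemma pert_generic :
  (forall (i0 : 'I_q) J, binary_mismatch i0 J != 0 ->
     base_mismatch (z i0) J + t * binary_mismatch i0 J != 0) ->
  forall i0 : 'I_q, generic_at (p + q) pert_coef pert_pt (z i0).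
Proof.
move=> avoid i0 J J_avoids; rewrite -subr_eq0.
have i0_notin : rshift p i0 \notin J.
  by apply/negP => /J_avoids; rewrite pert_pt_rshift.
suff -> : \sum_(k in J) pert_coef k - \sum_(k < p + q | `[< pert_pt k = z i0 >]) pert_coef k
    = base_mismatch (z i0) J + t * binary_mismatch i0 J.
  by apply: avoid; exact: binary_mismatch_neq0.
have at_z : \sum_(i < q | `[< pert_pt (rshift p i) = z i0 >]) pert_coef (rshift p i)
    = t * 2%:R ^+ i0.
  rewrite (big_pred1 i0) ?pert_coef_rshift // => i /=.
  rewrite pert_pt_rshift; apply/asboolP/eqP => [zi|-> //].
  exact/val_inj/(z_inj (ltn_ord i) (ltn_ord i0) zi).
have base_J : \sum_(k < p | lshift q k \in J) pert_coef (lshift q k)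
    = \sum_(k < p | lshift q k \in J) a0 k.
  by apply: eq_bigr => k _; rewrite pert_coef_lshift.
have binary_J : \sum_(i < q | rshift p i \in J) pert_coef (rshift p i)
    = t * \sum_(i < q | rshift p i \in J) 2%:R ^+ i.
  by rewrite mulr_sumr; apply: eq_bigr => i _; rewrite pert_coef_rshift.
have base_z : \sum_(k < p | `[< pert_pt (lshift q k) = z i0 >]) pert_coef (lshift q k)
    = \sum_(k < p | `[< y0 k = z i0 >]) a0 k.
  by apply: eq_big => k; rewrite ?pert_pt_lshift ?pert_coef_lshift.
rewrite /base_mismatch /binary_mismatch !big_split_ord /= at_z base_J binary_J base_z.
by ring.
Qed.

End Weights.

Lemma generic_perturbation (eps : R) : 0 < eps ->
  exists K a y, (fdist d pt (finmol K a y) (finmol p a0 y0) <= eps%:E)%E /\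
    forall i0 : 'I_q, generic_at K a y (z i0).
Proof.
move=> eps0; set S := \sum_(i < q) 2%:R ^+ i * d (z i) pt.
have S_ge0 : 0 <= S by rewrite sumr_ge0 // => i _; rewrite mulr_ge0 ?exprn_ge0 ?ler0n ?d_ge0.
have [t [t0 t_le avoid]] := avoid_roots
  (fun w : 'I_q * {set 'I_(p + q)} => base_mismatch (z w.1) w.2)
  (fun w => binary_mismatch w.1 w.2) (divr_gt0 eps0 (ltr_wpDl S_ge0 ltr01)).
exists (p + q)%N, (pert_coef t), pert_pt; split; last first.
  by apply: pert_generic => i0 J; apply: (avoid (i0, J)).
apply: le_trans (fdist_pert (ltW t0)) _; rewrite lee_fin.
apply: le_trans (ler_wpM2r S_ge0 t_le) _.
by rewrite mulrAC ler_pdivrMr ?ltr_wpDl ?ltr01 // ler_pM2l // lerDl ler01.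
Qed.

End Perturbation.

Section Recurrence.
Variables (R : realType) (M : Type) (d : M -> M -> R) (pt : M) (f : M -> M).
Hypothesis metric_d : is_metric d.
Hypothesis f_pt : f pt = pt.
Hypothesis rec_interior : nonempty_interior_in_free d pt (rec_fhat d pt f).

Lemma enum_finite_set (N : set M) : finite_set N ->
  exists (q : nat) (z : nat -> M),
    (forall i j, (i < q)%N -> (j < q)%N -> z i = z j -> i = j) /\
    forall x, N x -> exists i0 : 'I_q, x = z i0.
Proof.
move=> /(finite_seqP (N : set {classic M})) [s N_s].
exists (size (undup s)), (nth pt (undup s)); split.
  move=> i j i_lt j_lt zij.
  have := nth_uniq (pt : {classic M}) i_lt j_lt (undup_uniq s).
  by rewrite zij eqxx => /esym /eqP.
move=> x; rewrite N_s /= -mem_undup => x_in.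
have i0_lt : (index (x : {classic M}) (undup s) < size (undup s))%N by rewrite index_mem.
by exists (Ordinal i0_lt); rewrite /= (nth_index (pt : {classic M}) x_in).
Qed.

Lemma molecule_finmol (s : seq (R * M)) :
  molecule s = finmol (size s) (fun k => (nth (0, pt) s k).1) (fun k => (nth (0, pt) s k).2).
Proof.
rewrite /finmol -[s in LHS](mkseq_nth (0, pt)); congr molecule.
by apply: eq_mkseq => k; case: nth.
Qed.

Lemma simultaneous_recurrence (N : set M) : finite_set N ->
  exists n : nat -> nat, {homo n : i j / (i < j)%N >-> (i < j)%N} /\
    forall x, N x -> (fun j => d (iter (n j) f x) x) @ \oo --> 0.
Proof.
move=> N_fin; have [q [z [z_inj N_z]]] := enum_finite_set N_fin.
have [Phi0 [Phi0_free [r [r0 ball_rec]]]] := rec_interior.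
have [s0 s0_close] := Phi0_free.2 (r / 2) (divr_gt0 r0 (ltr0Sn _ 1)).
have [K [a [y [Phi_s0 generic]]]] :=
  generic_perturbation pt metric_d (size s0) (fun k => (nth (0, pt) s0 k).1)
    (fun k => (nth (0, pt) s0 k).2) z_inj (divr_gt0 r0 (ltr0Sn _ 3)).
rewrite -molecule_finmol in Phi_s0.
set Phi := finmol K a y in Phi_s0 generic.
have Phi_Phi0 : (fdist d pt Phi Phi0 < r%:E)%E.
  apply: le_lt_trans (fdist_triangle d pt _ (molecule s0) _) _.
  rewrite (fdist_sym d pt _ Phi0).
  apply: le_lt_trans (leeD Phi_s0 (ltW s0_close)) _.
  by rewrite -EFinD lte_fin; lra.
have [_ Phi_rec] := ball_rec Phi (molecule_free d pt _) Phi_Phi0.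
have Phi_returns j N0 : exists m, (N0 <= m)%N /\
    (fdist d pt Phi (iter m (fhat f) Phi) < (j.+1%:R^-1)%:E)%E.
  by apply: limn_einf0_frequently Phi_rec _ _ _; rewrite invr_gt0.
have [n [n_incr n_rec]] := increasing_witnesses Phi_returns.
exists n; split=> // x /N_z [i0 ->].
by apply: (generic_recurrence metric_d f_pt (generic i0)) => j; apply: n_rec.
Qed.
End Recurrence.

Unset Implicit Arguments.

Theorem proposition3p2 (R : realType) (M : Type) (d : M -> M -> R) (pt : M)
  (f : M -> M) :
  is_metric d -> lip0_self d pt f ->
  nonempty_interior_in_free d pt (rec_fhat d pt f) ->
  (forall N : set M, finite_set N -> N !=set0 ->
     exists n : nat -> nat, {homo n : i j / (i < j)%N >-> (i < j)%N} /\
       forall x, N x -> (fun j => d (iter (n j) f x) x) @ \oo --> 0)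
  /\ recM d f = setT.
Proof.
move=> metric_d [f_pt _] rec_interior.
have recurrence := simultaneous_recurrence metric_d f_pt rec_interior.
split=> [N N_fin _|]; first exact: recurrence.
apply/seteqP; split=> // x _.
have [n [n_incr x_returns]] := recurrence [set x] (finite_set1 x).
apply: (limn_einf0_subseq (v := fun k => d x (iter k f x))) n_incr _ => [k|].
  exact: d_ge0.
have -> : (fun j => d x (iter (n j) f x)) = (fun j => d (iter (n j) f x) x).
  by apply/funext => j; rewrite d_sym.
exact: x_returns.
Qed.
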